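(* Let $c\ge 3$ be an integer and $\lambda,\mu,\alpha>0$ with $\lambda<c\mu$. Let $(\pi_{i,j})_{(i,j)\in\mathcal S}$ be the stationary distribution of the continuous-time Markov chain on $\mathcal S=\{(i,j):0\le i\le c,\ j\ge i\}$ whose only transitions are: $(i,j)\to(i,j+1)$ at rate $\lambda$; $(i,j)\to(i+1,j)$ at rate $\min(j-i,c-i)\alpha$ for $i<c$, $j>i$; $(i,j)\to(i,j-1)$ at rate $i\mu$ for $i\ge1$, $j>i$; $(i,i)\to(i-1,i-1)$ at rate $i\mu$ for $i\ge 1$. For $k=1,\dots,c-1$ let $f_k(z)=(\lambda+k\mu+(c-k)\alpha)z-\lambda z^2-k\mu$ and let $z_k=\frac{\lambda+k\mu+(c-k)\alpha-\sqrt{(\lambda+k\mu+(c-k)\alpha)^2-4k\lambda\mu}}{2\lambda}$, $\hat z_k=\frac{\lambda+k\mu+(c-k)\alpha+\sqrt{(\lambda+k\mu+(c-k)\alpha)^2-4k\lambda\mu}}{2\lambda}$ be its roots ($0<z_k<1<\hat z_k$); let $\hat z_0=(\lambda+c\alpha)/\lambda$. For $k=0,\dots,c-1$ let $\widehat\Pi_k(z)=\sum_{j\ge c}\pi_{k,j}z^{j-k}$. Define constants $A_{k,j}$ ($1\le k\le c-1$, $0\le j\le k$) recursively by $A_{1,0}=\frac{c\alpha\pi_{0,c-1}\hat z_0}{f_1(\hat z_0)}$, $A_{1,1}=\pi_{1,c-1}-A_{1,0}$, and for $k\ge2$: $$A_{k,j}=\frac{(c-k+1)\alpha A_{k-1,j}\hat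 z_j}{f_k(\hat z_j)}\ (0\le j\le k-1),\qquad A_{k,k}=-(c-k+1)\alpha\sum_{j=0}^{k-1}\frac{A_{k-1,j}\hat z_j}{f_k(\hat z_j)}+\pi_{k,c-1}.$$ Fix $i\in\{2,\dots,c-1\}$. Define $a^{(i)}_c=\frac{(c-i+1)\alpha\widehat\Pi_{i-1}(z_i)}{i\mu z_i^{c-i}}$, $b^{(i)}_c=\frac{\lambda z_i}{i\mu}$, and for $j=c-1,\dots,i+1$, $$a^{(i)}_j=\frac{(j-i+1)\alpha\pi_{i-1,j}+i\mu a^{(i)}_{j+1}}{\lambda+i\mu+(j-i)\alpha-i\mu b^{(i)}_{j+1}},\qquad b^{(i)}_j=\frac{\lambda}{\lambda+i\mu+(j-i)\alpha-i\mu b^{(i)}_{j+1}}.$$ Then: (i) $\pi_{i,j}=a^{(i)}_j+b^{(i)}_j\pi_{i,j-1}$ for $j=i+1,\dots,c$; (ii) $a^{(i)}_j>0$ and $0<b^{(i)}_j<\frac{\lambda}{i\mu}$ for $j=i+1,\dots,c$; (iii) if $\hat z_0,\hat z_1,\dots,\hat z_{c-1}$ are pairwise distinct, then for all complex $z$ with $|z|\le1$, $$\widehat\Pi_i(z)=z^{c-i}\sum_{j=0}^{i}\frac{A_{i,j}}{\hat z_j-z}.$$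
   Context: The chain models an M/M/$c$ queue with setup times under the ON-OFF policy: $i$ is the number of busy servers, $j$ the number of jobs; arrivals Poisson($\lambda$), services exp($\mu$), setups exp($\alpha$). The condition $\lambda<c\mu$ guarantees a unique stationary distribution. *)

From Stdlib Require Import Reals Arith Lia Bool.
From Coquelicot Require Import Coquelicot.
Open Scope R_scope. Open Scope bool_scope.

(* The M/M/c queue with setup times (ON-OFF policy).  States (i,j) with
   0 <= i <= c and j >= i; pi : nat -> nat -> R, only its values on the state
   space S matter. *)

Definition inS (c i j : nat) : bool := (i <=? c)%nat && (i <=? j)%nat.

Definition rate (c : nat) (lam mu alpha : R) (i j i' j' : nat) : R :=
  (if (i' =? i)%nat && (j' =? S j)%nat then lam else 0)
  + (if (i <? c)%nat && (i <? j)%nat && (i' =? S i)%nat && (j' =? j)%nat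
     then INR (Nat.min (j - i) (c - i)) * alpha else 0)
  + (if (1 <=? i)%nat && (i <? j)%nat && (i' =? i)%nat && (S j' =? j)%nat
     then INR i * mu else 0)
  + (if (1 <=? i)%nat && (i =? j)%nat && (S i' =? i)%nat && (S j' =? j)%nat
     then INR i * mu else 0).

Definition outrate (c : nat) (lam mu alpha : R) (i j : nat) : R :=
  lam
  + (if (i <? c)%nat && (i <? j)%nat then INR (Nat.min (j - i) (c - i)) * alpha else 0)
  + (if (1 <=? i)%nat then INR i * mu else 0).

(* The sums over S are ordered by j, and for fixed j over 0 <= i <= min(c,j). *)
Definition stationary (c : nat) (lam mu alpha : R) (pi : nat -> nat -> R) : Prop :=
  (forall i j, inS c i j = true -> 0 <= pi i j) /\
  is_series (fun j => sum_f_R0 (fun i => pi i j) (Nat.min c j)) 1 /\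
  (forall i j, inS c i j = true ->
     is_series (fun j' => sum_f_R0 (fun i' => pi i' j' * rate c lam mu alpha i' j' i j)
                                   (Nat.min c j'))
               (pi i j * outrate c lam mu alpha i j)).

Section Consts.
Variables (c : nat) (lam mu alpha : R) (pi : nat -> nat -> R).

Definition bk (k : nat) : R := lam + INR k * mu + INR (c - k) * alpha.

Definition fk (k : nat) (z : R) : R := bk k * z - lam * z ^ 2 - INR k * mu.

Definition zk (k : nat) : R :=
  (bk k - sqrt (bk k ^ 2 - 4 * INR k * lam * mu)) / (2 * lam).

Definition zhat (k : nat) : R :=
  match k with
  | O => (lam + INR c * alpha) / lam
  | _ => (bk k + sqrt (bk k ^ 2 - 4 * INR k * lam * mu)) / (2 * lam)
  end.

Definition PihatR (k : nat) (x : R) : R :=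
  Series (fun m => pi k (c + m)%nat * x ^ (c + m - k)).

(* A_{k,j}; A 0 _ is unused (set to 0) *)
Fixpoint Acoef (k j : nat) : R :=
  match k with
  | O => 0
  | S k' =>
    match k' with
    | O =>
      let A10 := INR c * alpha * pi 0%nat (c - 1)%nat * zhat 0 / fk 1 (zhat 0) in
      match j with
      | O => A10
      | 1%nat => pi 1%nat (c - 1)%nat - A10
      | _ => 0
      end
    | S _ =>
      if (j <? k)%nat then
        INR (c - k + 1) * alpha * Acoef k' j * zhat j / fk k (zhat j)
      else if (j =? k)%nat then
        - (INR (c - k + 1) * alpha)
          * sum_f_R0 (fun l => Acoef k' l * zhat l / fk k (zhat l)) (k - 1)
        + pi k (c - 1)%nat
      else 0
    end
  end.

(* (a^{(i)}_j, b^{(i)}_j) for j = c - n, computed downward from j = c *)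
Fixpoint ab (i n : nat) : R * R :=
  match n with
  | O => ((INR (c - i + 1) * alpha * PihatR (i - 1) (zk i))
            / (INR i * mu * zk i ^ (c - i)),
          lam * zk i / (INR i * mu))
  | S n' =>
    let j := (c - n)%nat in
    let (a1, b1) := ab i n' in
    let den := lam + INR i * mu + INR (j - i) * alpha - INR i * mu * b1 in
    ((INR (j - i + 1) * alpha * pi (i - 1)%nat j + INR i * mu * a1) / den,
     lam / den)
  end.

Definition acoef (i j : nat) : R := fst (ab i (c - j)).
Definition bcoef (i j : nat) : R := snd (ab i (c - j)).

End Consts.

From Stdlib Require Import Reals Arith Lia Lra Bool.
From Coquelicot Require Import Coquelicot.
Open Scope R_scope.

(* For [j >= c] the balance equations of level [k] (1 <= k < c) form a second
   order linear recurrence in [j] with characteristic roots [1/z_k > 1] and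
   [1/zhat_k], driven by level [k-1].  Since [pi] is bounded, the component along
   the growing root must be cancelled by the driving term: writing
   [e_n = pi_{k,c+n} - pi_{k,c-1+n} / zhat_k], the first order recurrence
   [e_{n+1} = e_n / z_k - (driving term)] has a bounded solution only if
   [e_0 = sum_n (driving term)_n z_k^(n+1)].  For [k = i] this is exactly
   [pi_{i,c} = a_c + b_c pi_{i,c-1}]; the balance equations of level [i] then
   propagate (i) downwards from [j = c], and (ii) follows along the way from
   [pi_{i-1,c} > 0] (irreducibility).  For (iii), induction on [k] shows
   [pi_{k,c-1+n} = sum_j A_{k,j} zhat_j^(-n)]: the right-hand side solves the
   same recurrence (each mode [j < k] is driven by the mode [j] of level [k-1],
   the mode [j = k] is free because [f_k(zhat_k) = 0]), and the bounded
   difference, which vanishes at [n = 0], must vanish identically.  Summing the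
   geometric series yields the generating function. *)

Lemma is_series_Rplus (u v : nat -> R) (su sv : R) :
  is_series u su -> is_series v sv -> is_series (fun n => u n + v n) (su + sv).
Proof. apply (is_series_plus (K := R_AbsRing) (V := R_NormedModule)). Qed.

Lemma is_series_Rext (u v : nat -> R) (s : R) :
  (forall n, u n = v n) -> is_series u s -> is_series v s.
Proof. apply is_series_ext. Qed.

Lemma is_series_Rscal (k : R) (u : nat -> R) (s : R) :
  is_series u s -> is_series (fun n => k * u n) (k * s).
Proof. apply (is_series_scal_l (K := R_AbsRing) (V := R_NormedModule)). Qed.

Lemma sum_f_R0_nonneg (f : nat -> R) n :
  (forall i, (i <= n)%nat -> 0 <= f i) -> 0 <= sum_f_R0 f n.
Proof.
  intros Hf. induction n as [|n IH]; simpl; [apply Hf; lia|].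
  apply Rplus_le_le_0_compat; [apply IH; intros; apply Hf | apply Hf]; lia.
Qed.

Lemma sum_f_R0_term_le (f : nat -> R) n k :
  (forall i, (i <= n)%nat -> 0 <= f i) -> (k <= n)%nat -> f k <= sum_f_R0 f n.
Proof.
  intros Hf Hk. induction n as [|n IH].
  - replace k with 0%nat by lia. simpl. lra.
  - simpl. destruct (Nat.eq_dec k (S n)) as [->|Hne].
    + pose proof (sum_f_R0_nonneg f n ltac:(intros; apply Hf; lia)). lra.
    + pose proof (IH ltac:(intros; apply Hf; lia) ltac:(lia)).
      pose proof (Hf (S n) (le_n _)). lra.
Qed.

Lemma is_series_term_le (f : nat -> R) s n :
  is_series f s -> (forall k, 0 <= f k) -> f n <= s.
Proof.
  intros Hs Hf. apply is_series_Reals in Hs.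
  apply Rle_trans with (sum_f_R0 f n).
  - apply sum_f_R0_term_le; auto.
  - apply (growing_ineq (sum_f_R0 f)); auto.
    intro k. simpl. pose proof (Hf (S k)). lra.
Qed.

Definition delta_seq (p : nat) (v : R) (n : nat) : R := if (n =? p)%nat then v else 0.

Lemma sum_f_R0_delta_seq p v n :
  sum_f_R0 (delta_seq p v) n = if (p <=? n)%nat then v else 0.
Proof.
  unfold delta_seq. induction n as [|n IH]; cbn [sum_f_R0].
  - destruct p; simpl; lra.
  - rewrite IH. destruct (Nat.eqb_spec (S n) p), (Nat.leb_spec p n), (Nat.leb_spec p (S n));
      try lia; lra.
Qed.

Lemma is_series_delta_seq p v : is_series (delta_seq p v) v.
Proof.
  apply is_series_Reals. intros eps Heps. exists p. intros n Hn.
  rewrite sum_f_R0_delta_seq. destruct (Nat.leb_spec p n); [|lia].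
  unfold R_dist. rewrite Rminus_eq_0, Rabs_R0. exact Heps.
Qed.

Lemma is_series_zero (u : nat -> R) : (forall n, u n = 0) -> is_series u 0.
Proof.
  intros Hu. apply (is_series_Rext (delta_seq 0 0)); [|apply is_series_delta_seq].
  intro n. rewrite Hu. unfold delta_seq. now destruct (n =? 0)%nat.
Qed.

Lemma sum_f_R0_indicator (k n : nat) (b : bool) (v : R) :
  sum_f_R0 (fun i => if (i =? k)%nat && b then v else 0) n
  = if (k <=? n)%nat && b then v else 0.
Proof.
  destruct b; rewrite ?andb_true_r, ?andb_false_r.
  - rewrite <- sum_f_R0_delta_seq. apply sum_eq. intros. now rewrite andb_true_r.
  - apply sum_eq_R0. intros. now rewrite andb_false_r.
Qed.

(* Partial sums telescope to [e 0 - e (n+1) / x^(n+1)], and the remainder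
   vanishes because [e] is bounded and [x > 1]. *)
Lemma is_series_bounded_rec1 (e h : nat -> R) (x B : R) :
  1 < x -> (forall n, Rabs (e n) <= B) ->
  (forall n, e (S n) = x * e n - h (S n)) ->
  is_series (fun n => h (S n) * (/ x) ^ S n) (e 0%nat).
Proof.
  intros Hx HB Hrec. set (w := / x).
  assert (Hxw : x * w = 1) by (unfold w; field; lra).
  assert (Hw : 0 < w < 1).
  { unfold w. split; [apply Rinv_0_lt_compat; lra|].
    rewrite <- Rinv_1. apply Rinv_lt_contravar; lra. }
  assert (Hpart : forall n, sum_n (fun n => h (S n) * w ^ S n) n
                            = e 0%nat - e (S n) * w ^ S n).
  { intro n. induction n as [|n IH]; [rewrite sum_O | rewrite sum_Sn, IH]; simpl.
    - rewrite Hrec. assert (x * w * e 0%nat = e 0%nat) by (rewrite Hxw; ring). lra.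
    - rewrite (Hrec (S n)). change plus with Rplus.
      assert (x * w * (e (S n) * (w * w ^ n)) = e (S n) * (w * w ^ n)) by (rewrite Hxw; ring).
      lra. }
  assert (Hrem : is_lim_seq (fun n => e (S n) * w ^ S n) 0).
  { apply is_lim_seq_abs_0.
    apply is_lim_seq_le_le with (fun _ => 0) (fun n => B * w ^ S n).
    - intro n. rewrite Rabs_mult, (Rabs_pos_eq (w ^ S n)) by (apply pow_le; lra).
      split; [apply Rmult_le_pos; [apply Rabs_pos | apply pow_le; lra]|].
      apply Rmult_le_compat_r; [apply pow_le; lra | apply HB].
    - apply is_lim_seq_const.
    - replace (Finite 0) with (Rbar_mult B 0) by (simpl; f_equal; ring).
      apply is_lim_seq_scal_l. apply (is_lim_seq_incr_1 (fun n => w ^ n)).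
      apply is_lim_seq_geom. rewrite Rabs_pos_eq; lra. }
  assert (Hlim : is_lim_seq (fun n => e 0%nat - e (S n) * w ^ S n) (e 0%nat)).
  { replace (Finite (e 0%nat)) with (Rbar_minus (e 0%nat) 0) by (simpl; f_equal; ring).
    apply is_lim_seq_minus'; [apply is_lim_seq_const | exact Hrem]. }
  apply (is_lim_seq_ext _ _ _ (fun n => eq_sym (Hpart n))) in Hlim. exact Hlim.
Qed.

Lemma is_series_bounded_rec2 (Q h : nat -> R) (x1 x2 B : R) :
  1 < x1 -> (forall n, Rabs (Q n) <= B) ->
  (forall n, Q (S (S n)) = (x1 + x2) * Q (S n) - x1 * x2 * Q n - h (S n)) ->
  is_series (fun n => h (S n) * (/ x1) ^ S n) (Q 1%nat - x2 * Q 0%nat).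
Proof.
  intros Hx HB Hrec.
  apply (is_series_bounded_rec1 (fun n => Q (S n) - x2 * Q n) h x1 (B + Rabs x2 * B) Hx).
  - intro n. unfold Rminus. eapply Rle_trans; [apply Rabs_triang|].
    rewrite Rabs_Ropp, Rabs_mult. apply Rplus_le_compat; [apply HB|].
    apply Rmult_le_compat_l; [apply Rabs_pos | apply HB].
  - intro n. rewrite Hrec. ring.
Qed.

Lemma bounded_rec2_zero (Q : nat -> R) (x1 x2 B : R) :
  1 < x1 -> (forall n, Rabs (Q n) <= B) ->
  (forall n, Q (S (S n)) = (x1 + x2) * Q (S n) - x1 * x2 * Q n) ->
  Q 0%nat = 0 -> forall n, Q n = 0.
Proof.
  intros Hx HB Hrec H0.
  assert (H1 : Q 1%nat = 0).
  { pose proof (is_series_bounded_rec2 Q (fun _ => 0) x1 x2 B Hx HB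
                  ltac:(intro n; rewrite Hrec; ring)) as Hs.
    assert (Hs0 : is_series (fun n => 0 * (/ x1) ^ S n) 0)
      by (apply is_series_zero; intro; ring).
    apply is_series_unique in Hs, Hs0. rewrite H0 in Hs. lra. }
  assert (Hpair : forall n, Q n = 0 /\ Q (S n) = 0).
  { induction n as [|n [IH1 IH2]]; [auto|]. split; [exact IH2|]. rewrite Hrec, IH1, IH2. ring. }
  intro n. apply Hpair.
Qed.

Lemma nat_down_ind (P : nat -> Prop) lo hi :
  P hi -> (forall j, (lo <= j < hi)%nat -> P (S j) -> P j) ->
  forall j, (lo <= j <= hi)%nat -> P j.
Proof.
  intros Hhi Hstep j Hj. remember (hi - j)%nat as d eqn:Hd. revert j Hj Hd.
  induction d as [|d IH]; intros j Hj Hd.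
  - now replace j with hi by lia.
  - apply Hstep; [lia|]. apply IH; lia.
Qed.

(* [ring]/[field] over [C] fail on [pow_n]/[sum_n] terms typed in Coquelicot's
   algebraic hierarchy; abstract them as plain complex numbers first. *)
Ltac C_atomize_eq :=
  repeat match goal with
  | |- context [@pow_n C_Ring ?x ?n] =>
      let t := fresh "t" in set (t := @pow_n C_Ring x n) in *; clearbody t; change C in t
  | |- context [@sum_n ?G ?f ?n] =>
      let t := fresh "t" in set (t := @sum_n G f n) in *; clearbody t; change C in t
  end;
  match goal with |- @eq _ ?x ?y => change (@eq C x y) end.

Lemma Cmod_pow_n (z : C) n : Cmod (pow_n z n) = Cmod z ^ n.
Proof.
  induction n as [|n IH]; simpl; [apply Cmod_1|].
  change (pow_n z (S n)) with (z * pow_n z n)%C. rewrite Cmod_mult, IH. reflexivity.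
Qed.

Lemma pow_n_Cmult (x y : C) n : pow_n (x * y)%C n = (pow_n x n * pow_n y n)%C.
Proof.
  induction n as [|n IH]; [change (RtoC 1 = RtoC 1 * RtoC 1)%C; ring|].
  change (pow_n ?u (S n)) with (u * pow_n u n)%C. rewrite IH. C_atomize_eq. ring.
Qed.

Lemma RtoC_pow_n (x : R) n : RtoC (x ^ n) = pow_n (RtoC x) n.
Proof.
  induction n as [|n IH]; [reflexivity|].
  change (pow_n (RtoC x) (S n)) with (RtoC x * pow_n (RtoC x) n)%C.
  rewrite <- IH, <- RtoC_mult. reflexivity.
Qed.

Lemma RtoC_sum_f_R0 (f : nat -> R) n : RtoC (sum_f_R0 f n) = sum_n (fun j => RtoC (f j)) n.
Proof.
  induction n as [|n IH]; [now rewrite sum_O|].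
  rewrite sum_Sn, <- IH. apply RtoC_plus.
Qed.

Lemma Cminus_neq_0 (x y : C) : Cmod y < Cmod x -> (x - y)%C <> 0%C.
Proof.
  intros Hlt E. assert (x = y) by (replace x with (x - y + y)%C by ring; rewrite E; ring).
  subst. lra.
Qed.

Lemma geom_partial_sum_C (q : C) n :
  (sum_n (pow_n q) n * (1 - q))%C = (1 - pow_n q (S n))%C.
Proof.
  induction n as [|n IH].
  - rewrite sum_O. change (pow_n q 1) with (q * 1)%C. change (pow_n q 0) with (RtoC 1). ring.
  - rewrite sum_Sn. change plus with Cplus. rewrite Cmult_plus_distr_r, IH.
    change (pow_n q (S (S n))) with (q * pow_n q (S n))%C. ring.
Qed.

Lemma is_series_geom_C (q : C) : Cmod q < 1 -> is_series (pow_n q) (/ (1 - q))%C.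
Proof.
  intros Hq.
  assert (Hq1 : (1 - q)%C <> 0%C) by (apply Cminus_neq_0; rewrite Cmod_1; exact Hq).
  assert (Hm : 0 < Cmod (1 - q)) by (apply Cmod_gt_0; exact Hq1).
  apply filterlim_locally. intros eps.
  assert (Heps : 0 < eps * Cmod (1 - q)) by (apply Rmult_lt_0_compat; [apply cond_pos | exact Hm]).
  destruct (pow_lt_1_zero (Cmod q) ltac:(rewrite Rabs_pos_eq; [lra | apply Cmod_ge_0]) _ Heps)
    as [N HN].
  exists N. intros n Hn. apply norm_compat1.
  change (Cmod (sum_n (pow_n q) n - / (1 - q))%C < eps).
  replace (sum_n (pow_n q) n - / (1 - q))%C with (- pow_n q (S n) / (1 - q))%C.
  - rewrite Cmod_div, Cmod_opp, Cmod_pow_n by exact Hq1.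
    apply Rmult_lt_reg_r with (Cmod (1 - q)); [exact Hm|].
    unfold Rdiv. rewrite Rmult_assoc, Rinv_l by lra.
    specialize (HN (S n) ltac:(lia)). rewrite Rabs_pos_eq in HN by (apply pow_le, Cmod_ge_0).
    lra.
  - assert (Hs : sum_n (pow_n q) n = ((1 - pow_n q (S n)) / (1 - q))%C)
      by (rewrite <- geom_partial_sum_C; C_atomize_eq; field; exact Hq1).
    rewrite Hs. C_atomize_eq. field. exact Hq1.
Qed.

Lemma is_series_sum_n (f : nat -> nat -> C) (s : nat -> C) N :
  (forall j, (j <= N)%nat -> is_series (f j) (s j)) ->
  is_series (fun m => sum_n (fun j => f j m) N) (sum_n s N).
Proof.
  induction N as [|N IH]; intros Hf.
  - rewrite sum_O. apply (is_series_ext (f 0%nat)); [intro; now rewrite sum_O | apply Hf; lia].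
  - rewrite sum_Sn.
    apply (is_series_ext (fun m => plus (sum_n (fun j => f j m) N) (f (S N) m))).
    + intro m. now rewrite sum_Sn.
    + apply (is_series_plus (K := C_AbsRing) (V := C_NormedModule));
        [apply IH; intros; apply Hf | apply Hf]; lia.
Qed.

Lemma is_series_pole (A x : R) (z : C) : 0 < x -> Cmod z < x ->
  is_series (fun n => RtoC (A * (/ x) ^ S n) * pow_n z n)%C (RtoC A / (RtoC x - z))%C.
Proof.
  intros Hx Hz.
  set (q := (RtoC (/ x) * z)%C).
  assert (Hq : Cmod q < 1).
  { unfold q. rewrite Cmod_mult, Cmod_R, Rabs_pos_eq by (left; apply Rinv_0_lt_compat, Hx).
    apply Rmult_lt_reg_l with x; [exact Hx|]. field_simplify; lra. }
  assert (Hxz : (RtoC x - z)%C <> 0%C) by (apply Cminus_neq_0; rewrite Cmod_R, Rabs_pos_eq; lra).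
  assert (Hx0 : RtoC x <> 0%C) by (intro E; apply RtoC_inj in E; lra).
  apply (is_series_ext (fun n => scal (RtoC (A * / x)) (pow_n q n))).
  - intro n. change (scal ?u ?v) with (u * v)%C. unfold q.
    rewrite pow_n_Cmult, <- RtoC_pow_n. simpl pow. rewrite !RtoC_mult. C_atomize_eq. ring.
  - replace (RtoC A / (RtoC x - z))%C with (scal (RtoC (A * / x)) (/ (1 - q)))%C.
    + apply (is_series_scal_l (K := C_AbsRing) (V := C_NormedModule)), is_series_geom_C, Hq.
    + change (scal ?u ?v) with (u * v)%C. unfold q.
      rewrite RtoC_mult, RtoC_inv by lra. C_atomize_eq. field. split; [exact Hxz | exact Hx0].
Qed.

Lemma sum_n_Cmult_r (u : nat -> C) (x : C) N :
  sum_n (fun j => (u j * x)%C) N = (sum_n u N * x)%C.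
Proof. apply (sum_n_mult_r (K := C_Ring)). Qed.

Ltac case_nat_tests :=
  repeat (match goal with
          | |- context [Nat.eqb ?a ?b] => destruct (Nat.eqb_spec a b)
          | |- context [Nat.ltb ?a ?b] => destruct (Nat.ltb_spec a b)
          | |- context [Nat.leb ?a ?b] => destruct (Nat.leb_spec a b)
          end; cbn [andb]; try (exfalso; lia)).

Lemma inS_intro c i j : (i <= c)%nat -> (i <= j)%nat -> inS c i j = true.
Proof. intros. unfold inS. apply andb_true_intro; split; apply Nat.leb_le; lia. Qed.

Section Balance.
Variables (c : nat) (lam mu alpha : R) (pi : nat -> nat -> R).

Lemma rate_into_interior k j i' j' : (1 <= k < c)%nat -> (k < j)%nat ->
  pi i' j' * rate c lam mu alpha i' j' k j =
    (if (i' =? k) && (j' =? j - 1) then pi k (j - 1)%nat * lam else 0)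
  + (if (i' =? k - 1) && (j' =? j)
     then pi (k - 1)%nat j * (INR (Nat.min (j - k + 1) (c - k + 1)) * alpha) else 0)
  + (if (i' =? k) && (j' =? S j) then pi k (S j) * (INR k * mu) else 0).
Proof.
  intros Hk Hj.
  assert (Hmin : Nat.min (j - (k - 1)) (c - (k - 1)) = Nat.min (j - k + 1) (c - k + 1)) by lia.
  unfold rate. case_nat_tests; try subst i'; try subst j'; rewrite ?Hmin; try ring;
    subst; rewrite Nat.sub_succ, Nat.sub_0_r; ring.
Qed.

Lemma rate_into_level0 j i' j' : (0 < c)%nat -> (0 < j)%nat ->
  pi i' j' * rate c lam mu alpha i' j' 0 j =
  (if (i' =? 0) && (j' =? j - 1) then pi 0%nat (j - 1)%nat * lam else 0).
Proof. intros. unfold rate. case_nat_tests; subst; rewrite ?Nat.sub_succ, ?Nat.sub_0_r; ring. Qed.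

Hypothesis Hst : stationary c lam mu alpha pi.

(* The three states feeding [(k,j)] lie in three different columns [j'], so the
   inflow series has exactly three nonzero terms. *)
Lemma balance_interior k j : (1 <= k < c)%nat -> (k < j)%nat ->
  pi k j * (lam + INR (Nat.min (j - k) (c - k)) * alpha + INR k * mu) =
  lam * pi k (j - 1)%nat + INR (Nat.min (j - k + 1) (c - k + 1)) * alpha * pi (k - 1)%nat j
  + INR k * mu * pi k (S j).
Proof.
  intros Hk Hj. destruct Hst as [_ [_ Hbal]].
  specialize (Hbal k j (inS_intro c k j ltac:(lia) ltac:(lia))).
  replace (lam + INR (Nat.min (j - k) (c - k)) * alpha + INR k * mu)
    with (outrate c lam mu alpha k j) by (unfold outrate; case_nat_tests; ring).
  rewrite <- (is_series_unique _ _ Hbal). apply is_series_unique.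
  apply (is_series_Rext (fun j' => delta_seq (j - 1) (lam * pi k (j - 1)%nat) j'
                               + delta_seq j (INR (Nat.min (j - k + 1) (c - k + 1)) * alpha
                                              * pi (k - 1)%nat j) j'
                               + delta_seq (S j) (INR k * mu * pi k (S j)) j')).
  - intro j'. rewrite (sum_eq _ _ _ (fun i' _ => rate_into_interior k j i' j' Hk Hj)).
    rewrite !sum_plus, !sum_f_R0_indicator. unfold delta_seq. case_nat_tests; ring.
  - apply is_series_Rplus; [apply is_series_Rplus|]; apply is_series_delta_seq.
Qed.

Lemma balance_level0 j : (0 < c)%nat -> (c <= j)%nat ->
  pi 0%nat j * (lam + INR c * alpha) = lam * pi 0%nat (j - 1)%nat.
Proof.
  intros Hc Hj. destruct Hst as [_ [_ Hbal]].
  specialize (Hbal 0%nat j (inS_intro c 0 j ltac:(lia) ltac:(lia))).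
  replace (lam + INR c * alpha) with (outrate c lam mu alpha 0 j)
    by (unfold outrate; case_nat_tests; rewrite !Nat.sub_0_r, Nat.min_r by lia; ring).
  rewrite <- (is_series_unique _ _ Hbal). apply is_series_unique.
  apply (is_series_Rext (delta_seq (j - 1) (lam * pi 0%nat (j - 1)%nat))).
  - intro j'. rewrite (sum_eq _ _ _ (fun i' _ => rate_into_level0 j i' j' Hc ltac:(lia))).
    rewrite sum_f_R0_indicator. unfold delta_seq. case_nat_tests; ring.
  - apply is_series_delta_seq.
Qed.

End Balance.

Section Positivity.
Variables (c : nat) (lam mu alpha : R) (pi : nat -> nat -> R).
Hypotheses (Hlam : 0 < lam) (Hmu : 0 < mu) (Halpha : 0 < alpha)
  (Hst : stationary c lam mu alpha pi).

Lemma stationary_nonneg i j : (i <= c)%nat -> (i <= j)%nat -> 0 <= pi i j.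
Proof. intros. apply (proj1 Hst), inS_intro; assumption. Qed.

Lemma stationary_le_1 i j : (i <= c)%nat -> (i <= j)%nat -> pi i j <= 1.
Proof.
  intros Hi Hj. destruct Hst as [_ [Hmass _]].
  apply Rle_trans with (sum_f_R0 (fun i => pi i j) (Nat.min c j)).
  - apply (sum_f_R0_term_le (fun i => pi i j)); [|lia].
    intros. apply stationary_nonneg; lia.
  - apply (is_series_term_le _ _ j Hmass). intro n.
    apply sum_f_R0_nonneg. intros. apply stationary_nonneg; lia.
Qed.

Lemma rate_nonneg i j i' j' : 0 <= rate c lam mu alpha i j i' j'.
Proof.
  unfold rate.
  assert (0 <= INR (Nat.min (j - i) (c - i)) * alpha) by (apply Rmult_le_pos; [apply pos_INR | lra]).
  assert (0 <= INR i * mu) by (apply Rmult_le_pos; [apply pos_INR | lra]).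
  repeat match goal with |- context [if ?b then _ else _] => destruct b end; lra.
Qed.

(* The inflow into a state is a series of nonnegative terms summing to
   [pi i j * outrate], so every term vanishes when [pi i j] does. *)
Lemma stationary_zero_pred i j i' j' :
  (i <= c)%nat -> (i <= j)%nat -> (i' <= c)%nat -> (i' <= j')%nat ->
  0 < rate c lam mu alpha i' j' i j -> pi i j = 0 -> pi i' j' = 0.
Proof.
  intros Hi Hj Hi' Hj' Hrate H0. destruct Hst as [_ [_ Hbal]].
  specialize (Hbal i j (inS_intro c i j Hi Hj)). rewrite H0, Rmult_0_l in Hbal.
  assert (Hterm : forall j'' i'', (i'' <= Nat.min c j'')%nat ->
            0 <= pi i'' j'' * rate c lam mu alpha i'' j'' i j).
  { intros. apply Rmult_le_pos; [apply stationary_nonneg; lia | apply rate_nonneg]. }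
  assert (pi i' j' * rate c lam mu alpha i' j' i j <= 0).
  { eapply Rle_trans.
    { apply (sum_f_R0_term_le (fun i'' => pi i'' j' * rate c lam mu alpha i'' j' i j));
        [apply Hterm | lia]. }
    apply (is_series_term_le _ _ j' Hbal). intro n.
    apply sum_f_R0_nonneg. apply Hterm. }
  pose proof (stationary_nonneg i' j' Hi' Hj'). nra.
Qed.

Lemma stationary_zero_left i j : (i <= c)%nat -> (i <= j)%nat -> pi i (S j) = 0 -> pi i j = 0.
Proof.
  intros Hi Hj. apply stationary_zero_pred; try lia. unfold rate.
  assert (0 <= INR (Nat.min (j - i) (c - i)) * alpha) by (apply Rmult_le_pos; [apply pos_INR | lra]).
  assert (0 <= INR i * mu) by (apply Rmult_le_pos; [apply pos_INR | lra]).
  case_nat_tests; lra.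
Qed.

Lemma stationary_zero_up i j : (i < c)%nat -> (i < j)%nat -> pi (S i) j = 0 -> pi i j = 0.
Proof.
  intros Hi Hj. apply stationary_zero_pred; try lia. unfold rate.
  assert (0 < INR (Nat.min (j - i) (c - i)) * alpha) by (apply Rmult_lt_0_compat; [apply lt_0_INR; lia | lra]).
  assert (0 <= INR i * mu) by (apply Rmult_le_pos; [apply pos_INR | lra]).
  case_nat_tests; lra.
Qed.

Lemma stationary_zero_right i j : (1 <= i <= c)%nat -> (i <= j)%nat -> pi i j = 0 -> pi i (S j) = 0.
Proof.
  intros Hi Hj. apply stationary_zero_pred; try lia. unfold rate.
  assert (0 <= INR (Nat.min (S j - i) (c - i)) * alpha) by (apply Rmult_le_pos; [apply pos_INR | lra]).
  assert (0 < INR i * mu) by (apply Rmult_lt_0_compat; [apply lt_0_INR; lia | lra]).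
  case_nat_tests; lra.
Qed.

Lemma stationary_zero_diag i : (i < c)%nat -> pi i i = 0 -> pi (S i) (S i) = 0.
Proof.
  intros Hi. apply stationary_zero_pred; try lia. unfold rate.
  assert (0 < INR (S i) * mu) by (apply Rmult_lt_0_compat; [apply lt_0_INR; lia | lra]).
  case_nat_tests; lra.
Qed.

(* Every state reaches [(k, c)], so zero mass there propagates backwards along
   transitions to the whole state space. *)
Lemma stationary_zero_everywhere k : (1 <= c)%nat -> (k <= c)%nat -> pi k c = 0 ->
  forall i j, (i <= c)%nat -> (i <= j)%nat -> pi i j = 0.
Proof.
  intros Hc Hk Hkc.
  assert (Hleft : forall i j d, (i <= c)%nat -> (i <= j)%nat -> pi i (j + d)%nat = 0 -> pi i j = 0).
  { intros i j d Hi Hj. induction d as [|d IH]; rewrite ?Nat.add_0_r; [easy|].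
    intro H. apply IH, stationary_zero_left; [lia | lia |]. now rewrite <- Nat.add_succ_r. }
  assert (Hdiag : forall d, (k + d <= c)%nat -> pi (k + d)%nat (k + d)%nat = 0).
  { induction d as [|d IH]; intro Hd.
    - rewrite Nat.add_0_r. apply (Hleft k k (c - k)%nat); [lia | lia |].
      now replace (k + (c - k))%nat with c by lia.
    - rewrite Nat.add_succ_r. apply stationary_zero_diag; [lia | apply IH; lia]. }
  assert (Hrowc : forall d, pi c (c + d)%nat = 0).
  { induction d as [|d IH].
    - rewrite Nat.add_0_r. replace c with (k + (c - k))%nat at 1 2 by lia. apply Hdiag. lia.
    - rewrite Nat.add_succ_r. apply stationary_zero_right; [lia | lia | exact IH]. }
  assert (Habove : forall e d, (e <= c)%nat -> pi (c - e)%nat (c + d)%nat = 0).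
  { induction e as [|e IH]; intros d He; [now rewrite Nat.sub_0_r|].
    apply stationary_zero_up; [lia | lia |]. replace (S (c - S e)) with (c - e)%nat by lia.
    apply IH. lia. }
  intros i j Hi Hj. replace i with (c - (c - i))%nat by lia.
  destruct (Nat.le_gt_cases c j).
  - replace j with (c + (j - c))%nat by lia. apply Habove. lia.
  - apply (Hleft _ j (c - j)%nat); [lia | lia |].
    replace (j + (c - j))%nat with (c + 0)%nat by lia. apply Habove. lia.
Qed.

Lemma stationary_pos_at_c k : (1 <= c)%nat -> (k <= c)%nat -> 0 < pi k c.
Proof.
  intros Hc Hk. destruct (Rle_lt_or_eq_dec _ _ (stationary_nonneg k c Hk Hk)) as [|E]; [easy|].
  exfalso. pose proof (stationary_zero_everywhere k Hc Hk (eq_sym E)) as Hzero.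
  destruct Hst as [_ [Hmass _]].
  assert (Hmass0 : is_series (fun j => sum_f_R0 (fun i => pi i j) (Nat.min c j)) 0).
  { apply is_series_zero. intro n. apply sum_eq_R0. intros i Hi. apply Hzero; lia. }
  apply is_series_unique in Hmass, Hmass0. lra.
Qed.

End Positivity.

Lemma fk_inv_pow c lam mu alpha k x n : x <> 0 ->
  INR k * mu * (/ x) ^ S (S n) - bk c lam mu alpha k * (/ x) ^ S n + lam * (/ x) ^ n
  = - fk c lam mu alpha k x * (/ x) ^ S (S n).
Proof. intros Hx. unfold fk. simpl. field. exact Hx. Qed.

Section Quadratic.
Variables (c : nat) (lam mu alpha : R) (k : nat).
Hypotheses (Hlam : 0 < lam) (Hmu : 0 < mu) (Halpha : 0 < alpha) (Hk : (1 <= k < c)%nat).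

Let b := bk c lam mu alpha k.
Let s := sqrt (b ^ 2 - 4 * INR k * lam * mu).

Lemma INR_k_mu_pos : 0 < INR k * mu.
Proof. apply Rmult_lt_0_compat; [apply lt_0_INR; lia | exact Hmu]. Qed.

Lemma bk_sub_gt : 0 < b - lam - INR k * mu.
Proof.
  unfold b, bk. ring_simplify. apply Rmult_lt_0_compat; [apply lt_0_INR; lia | exact Halpha].
Qed.

Lemma sqrt_discr_sq : s * s = b ^ 2 - 4 * INR k * lam * mu.
Proof.
  apply sqrt_sqrt. pose proof INR_k_mu_pos. pose proof bk_sub_gt.
  assert (0 <= (lam - INR k * mu) ^ 2) by apply pow2_ge_0. nra.
Qed.

Lemma sqrt_discr_pos : 0 < s.
Proof.
  apply sqrt_lt_R0. pose proof INR_k_mu_pos. pose proof bk_sub_gt.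
  assert (0 <= (lam - INR k * mu) ^ 2) by apply pow2_ge_0. nra.
Qed.

Lemma zhat_root : zhat c lam mu alpha k = (b + s) / (2 * lam).
Proof. destruct k; [lia | reflexivity]. Qed.

Lemma zk_add_zhat : zk c lam mu alpha k + zhat c lam mu alpha k = b / lam.
Proof. rewrite zhat_root. unfold zk. fold b s. field. lra. Qed.

Lemma zk_mul_zhat : zk c lam mu alpha k * zhat c lam mu alpha k = INR k * mu / lam.
Proof.
  rewrite zhat_root. unfold zk. fold b s. pose proof sqrt_discr_sq.
  replace ((b - s) / (2 * lam) * ((b + s) / (2 * lam))) with ((b * b - s * s) / (4 * lam * lam))
    by (field; lra).
  rewrite H. field. lra.
Qed.

Lemma fk_factor x :
  fk c lam mu alpha k x = - lam * (x - zk c lam mu alpha k) * (x - zhat c lam mu alpha k).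
Proof.
  transitivity (- lam * x ^ 2 + lam * (zk c lam mu alpha k + zhat c lam mu alpha k) * x
                - lam * (zk c lam mu alpha k * zhat c lam mu alpha k)); [|ring].
  rewrite zk_add_zhat, zk_mul_zhat. unfold fk. fold b. field. lra.
Qed.

Lemma fk_zhat : fk c lam mu alpha k (zhat c lam mu alpha k) = 0.
Proof. rewrite fk_factor. ring. Qed.

(* [f_k(1) = (c - k) alpha > 0] separates the roots, [f_k(0) = - k mu < 0] puts
   both on the same side of [0]. *)
Lemma zk_zhat_bounds : 0 < zk c lam mu alpha k < 1 /\ 1 < zhat c lam mu alpha k.
Proof.
  assert (Hlt : zk c lam mu alpha k < zhat c lam mu alpha k).
  { rewrite zhat_root. unfold zk. fold b s. pose proof sqrt_discr_pos.
    unfold Rdiv. apply Rmult_lt_compat_r; [apply Rinv_0_lt_compat |]; lra. }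
  assert (H1 : 0 < fk c lam mu alpha k 1) by (unfold fk; fold b; pose proof bk_sub_gt; lra).
  rewrite fk_factor in H1. pose proof zk_mul_zhat as Hmul. pose proof INR_k_mu_pos.
  assert (0 < INR k * mu / lam) by (apply Rdiv_lt_0_compat; lra).
  set (z := zk c lam mu alpha k) in *. set (zh := zhat c lam mu alpha k) in *.
  assert (Hprod : (1 - z) * (1 - zh) < 0).
  { destruct (Rlt_or_le ((1 - z) * (1 - zh)) 0); [assumption | nra]. }
  assert (Hz1 : z < 1) by (destruct (Rlt_or_le z 1); [assumption | nra]).
  assert (Hzh1 : 1 < zh) by nra.
  repeat split; nra.
Qed.

Lemma inv_zhat : / zhat c lam mu alpha k = lam * zk c lam mu alpha k / (INR k * mu).
Proof.
  pose proof zk_mul_zhat as Hmul. destruct zk_zhat_bounds as [[Hz _] Hzh].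
  assert (0 < INR k) by (apply lt_0_INR; lia).
  replace (/ zhat c lam mu alpha k)
    with (zk c lam mu alpha k / (zk c lam mu alpha k * zhat c lam mu alpha k)) by (field; lra).
  rewrite Hmul. field. lra.
Qed.

(* Dividing by [k mu], Vieta's formulas turn the characteristic polynomial
   [k mu X^2 - b X + lam] into [(X - 1/z_k) (X - 1/zhat_k)]. *)
Lemma recurrence_root_form (Q h : nat -> R) :
  (forall n, INR k * mu * Q (S (S n)) - b * Q (S n) + lam * Q n = - h (S n)) ->
  forall n, Q (S (S n)) =
    (/ zk c lam mu alpha k + / zhat c lam mu alpha k) * Q (S n)
    - / zk c lam mu alpha k * / zhat c lam mu alpha k * Q n - h (S n) / (INR k * mu).
Proof.
  intros Hrec n. pose proof zk_add_zhat as Hadd. pose proof zk_mul_zhat as Hmul.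
  pose proof zk_zhat_bounds. assert (0 < INR k) by (apply lt_0_INR; lia).
  set (z := zk c lam mu alpha k) in *. set (zh := zhat c lam mu alpha k) in *.
  replace (/ z + / zh) with ((z + zh) / (z * zh)) by (field; lra).
  replace (/ z * / zh) with (/ (z * zh)) by (field; lra).
  rewrite Hadd, Hmul. specialize (Hrec n).
  apply Rmult_eq_reg_l with (INR k * mu); [|nra].
  replace (INR k * mu * (b / lam / (INR k * mu / lam) * Q (S n)
             - / (INR k * mu / lam) * Q n - h (S n) / (INR k * mu)))
    with (b * Q (S n) - lam * Q n - h (S n)) by (field; lra).
  lra.
Qed.

End Quadratic.

Lemma zhat_gt_1 c lam mu alpha j : 0 < lam -> 0 < mu -> 0 < alpha -> (j < c)%nat ->
  1 < zhat c lam mu alpha j.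
Proof.
  intros Hlam Hmu Halpha Hj. destruct j as [|j].
  - simpl. apply Rmult_lt_reg_r with lam; [exact Hlam|].
    assert (0 < INR c * alpha) by (apply Rmult_lt_0_compat; [apply lt_0_INR; lia | lra]).
    field_simplify; lra.
  - apply (zk_zhat_bounds c lam mu alpha (S j)); auto; lia.
Qed.

Section Levels.
Variables (c : nat) (lam mu alpha : R) (pi : nat -> nat -> R).
Hypotheses (Hlam : 0 < lam) (Hmu : 0 < mu) (Halpha : 0 < alpha)
  (Hst : stationary c lam mu alpha pi).

Lemma level_recurrence k n : (1 <= k < c)%nat ->
  INR k * mu * pi k (c - 1 + S (S n))%nat - bk c lam mu alpha k * pi k (c - 1 + S n)%nat
  + lam * pi k (c - 1 + n)%nat
  = - (INR (c - k + 1) * alpha * pi (k - 1)%nat (c - 1 + S n)%nat).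
Proof.
  intros Hk. pose proof (balance_interior c lam mu alpha pi Hst k (c + n) Hk ltac:(lia)) as Hbal.
  rewrite Nat.min_r, (Nat.min_r (c + n - k + 1)) in Hbal by lia.
  replace (c - 1 + S (S n))%nat with (S (c + n)) by lia.
  replace (c - 1 + S n)%nat with (c + n)%nat by lia.
  replace (c - 1 + n)%nat with (c + n - 1)%nat by lia.
  unfold bk. lra.
Qed.

Lemma level_bounded k n : (k < c)%nat -> Rabs (pi k (c - 1 + n)%nat) <= 1.
Proof.
  intros Hk. rewrite Rabs_pos_eq.
  - eapply stationary_le_1; [exact Hst | lia | lia].
  - eapply stationary_nonneg; [exact Hst | lia | lia].
Qed.

Lemma level_boundary_series k : (1 <= k < c)%nat ->
  is_series (fun n => INR (c - k + 1) * alpha / (INR k * mu) * pi (k - 1)%nat (c + n)%nat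
                      * zk c lam mu alpha k ^ S n)
    (pi k c - lam * zk c lam mu alpha k / (INR k * mu) * pi k (c - 1)%nat).
Proof.
  intros Hk. destruct (zk_zhat_bounds c lam mu alpha k Hlam Hmu Halpha Hk) as [[Hz0 Hz1] _].
  set (h := fun n => INR (c - k + 1) * alpha * pi (k - 1)%nat (c - 1 + n)%nat).
  pose proof (is_series_bounded_rec2 (fun n => pi k (c - 1 + n)%nat)
    (fun n => h n / (INR k * mu)) (/ zk c lam mu alpha k) (/ zhat c lam mu alpha k) 1)
    as Hs.
  rewrite <- (inv_zhat c lam mu alpha k) by auto.
  replace (pi k c) with (pi k (c - 1 + 1)%nat) by (f_equal; lia).
  replace (pi k (c - 1)%nat) with (pi k (c - 1 + 0)%nat) by (f_equal; lia).
  apply (is_series_Rext (fun n => h (S n) / (INR k * mu) * (/ / zk c lam mu alpha k) ^ S n)).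
  - intro n. unfold h. rewrite Rinv_inv. replace (c - 1 + S n)%nat with (c + n)%nat by lia.
    unfold Rdiv. ring.
  - apply Hs.
    + rewrite <- Rinv_1. apply Rinv_lt_contravar; lra.
    + intro n. apply level_bounded. lia.
    + apply (recurrence_root_form c lam mu alpha k Hlam Hmu Halpha Hk
               (fun n => pi k (c - 1 + n)%nat) h).
      intro n. apply level_recurrence, Hk.
Qed.


Section RatioCoefficients.
Variable i : nat.
Hypothesis Hi : (1 <= i < c)%nat.

Lemma INR_i_pos : 0 < INR i.
Proof. apply lt_0_INR. lia. Qed.

Lemma INR_i_mu_pos : 0 < INR i * mu.
Proof. apply Rmult_lt_0_compat; [exact INR_i_pos | exact Hmu]. Qed.

Let den j := lam + INR i * mu + INR (j - i) * alpha - INR i * mu * bcoef c lam mu alpha pi i (S j).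

Lemma bcoef_at_c : bcoef c lam mu alpha pi i c = lam * zk c lam mu alpha i / (INR i * mu).
Proof. unfold bcoef. now rewrite Nat.sub_diag. Qed.

Lemma acoef_at_c :
  acoef c lam mu alpha pi i c = pi i c - bcoef c lam mu alpha pi i c * pi i (c - 1)%nat.
Proof.
  rewrite bcoef_at_c. pose proof (level_boundary_series i Hi) as Hs.
  destruct (zk_zhat_bounds c lam mu alpha i Hlam Hmu Halpha Hi) as [[Hz0 _] _].
  pose proof INR_i_pos. assert (0 < INR (c - i + 1)) by (apply lt_0_INR; lia).
  set (z := zk c lam mu alpha i) in *.
  set (g := INR (c - i + 1) * alpha / (INR i * mu)).
  unfold acoef. rewrite Nat.sub_diag. cbn [ab fst]. fold z.
  assert (HP : PihatR c pi (i - 1) z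
               = z ^ (c - i) / g * (pi i c - lam * z / (INR i * mu) * pi i (c - 1)%nat)).
  { apply is_series_unique.
    apply (is_series_Rext (fun n => z ^ (c - i) / g
                          * (g * pi (i - 1)%nat (c + n)%nat * z ^ S n))).
    - intro n. replace (c + n - (i - 1))%nat with (c - i + S n)%nat by lia.
      rewrite pow_add. unfold g. field. split; lra.
    - apply is_series_Rscal, Hs. }
  rewrite HP. unfold g. field. repeat split; try lra. apply pow_nonzero. lra.
Qed.

Lemma acoef_at_c_pos : 0 < acoef c lam mu alpha pi i c.
Proof.
  rewrite acoef_at_c, bcoef_at_c.
  destruct (zk_zhat_bounds c lam mu alpha i Hlam Hmu Halpha Hi) as [[Hz0 _] _].
  assert (Hg : 0 < INR (c - i + 1) * alpha / (INR i * mu)).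
  { apply Rdiv_lt_0_compat; apply Rmult_lt_0_compat; try apply lt_0_INR; lia || lra. }
  eapply Rlt_le_trans; [|apply (is_series_term_le _ _ 0 (level_boundary_series i Hi))].
  - rewrite Nat.add_0_r. apply Rmult_lt_0_compat; [apply Rmult_lt_0_compat|].
    + exact Hg.
    + apply (stationary_pos_at_c c lam mu alpha); auto; lia.
    + apply pow_lt. exact Hz0.
  - intro n. apply Rmult_le_pos; [apply Rmult_le_pos|].
    + lra.
    + eapply stationary_nonneg; [exact Hst | lia | lia].
    + apply pow_le. lra.
Qed.

Lemma acoef_bcoef_step j : (i + 1 <= j <= c - 1)%nat ->
  acoef c lam mu alpha pi i j
    = (INR (j - i + 1) * alpha * pi (i - 1)%nat j + INR i * mu * acoef c lam mu alpha pi i (S j))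
      / den j
  /\ bcoef c lam mu alpha pi i j = lam / den j.
Proof.
  intros Hj. unfold den, acoef, bcoef.
  replace (c - j)%nat with (S (c - S j)) by lia. cbn [ab].
  destruct (ab c lam mu alpha pi i (c - S j)) as [a1 b1]. cbn [fst snd].
  replace (c - S (c - S j))%nat with j by lia. split; reflexivity.
Qed.

Lemma den_lower_bound j : (i + 1 <= j <= c - 1)%nat -> bcoef c lam mu alpha pi i (S j) < lam / (INR i * mu) ->
  INR i * mu + INR (j - i) * alpha < den j.
Proof.
  intros Hj Hb. unfold den. pose proof INR_i_pos. pose proof INR_i_mu_pos.
  assert (INR i * mu * bcoef c lam mu alpha pi i (S j) < lam).
  { apply Rmult_lt_compat_l with (r := INR i * mu) in Hb; [|lra].
    replace (INR i * mu * (lam / (INR i * mu))) with lam in Hb by (field; lra). exact Hb. }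
  lra.
Qed.

Lemma bcoef_bounds j : (i + 1 <= j <= c)%nat ->
  0 < bcoef c lam mu alpha pi i j < lam / (INR i * mu).
Proof.
  revert j. apply (nat_down_ind (fun j => 0 < bcoef c lam mu alpha pi i j < lam / (INR i * mu))).
  - rewrite bcoef_at_c. destruct (zk_zhat_bounds c lam mu alpha i Hlam Hmu Halpha Hi) as [[Hz0 Hz1] _].
    pose proof INR_i_mu_pos.
    split; unfold Rdiv; [apply Rmult_lt_0_compat; [nra | apply Rinv_0_lt_compat; lra]|].
    apply Rmult_lt_compat_r; [apply Rinv_0_lt_compat |]; nra.
  - intros j Hj [_ Hb]. destruct (acoef_bcoef_step j ltac:(lia)) as [_ ->].
    pose proof (den_lower_bound j ltac:(lia) Hb) as Hden.
    assert (0 < INR (j - i) * alpha) by (apply Rmult_lt_0_compat; [apply lt_0_INR |]; lia || lra).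
    pose proof INR_i_mu_pos.
    split; [apply Rdiv_lt_0_compat; lra|].
    unfold Rdiv. apply Rmult_lt_compat_l; [lra|]. apply Rinv_lt_contravar; nra.
Qed.

Lemma acoef_pos j : (i + 1 <= j <= c)%nat -> 0 < acoef c lam mu alpha pi i j.
Proof.
  revert j. apply (nat_down_ind (fun j => 0 < acoef c lam mu alpha pi i j)); [exact acoef_at_c_pos|].
  intros j Hj Ha. destruct (acoef_bcoef_step j ltac:(lia)) as [-> _].
  pose proof (den_lower_bound j ltac:(lia) (proj2 (bcoef_bounds (S j) ltac:(lia)))).
  pose proof INR_i_pos.
  assert (0 <= INR (j - i + 1) * alpha * pi (i - 1)%nat j).
  { apply Rmult_le_pos; [apply Rmult_le_pos; [apply pos_INR | lra]|].
    eapply stationary_nonneg; [exact Hst | lia | lia]. }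
  assert (0 < INR (j - i) * alpha) by (apply Rmult_lt_0_compat; [apply lt_0_INR; lia | lra]).
  assert (0 < INR i * mu * acoef c lam mu alpha pi i (S j)).
  { apply Rmult_lt_0_compat; [apply Rmult_lt_0_compat|]; lra. }
  apply Rdiv_lt_0_compat; nra.
Qed.

Lemma pi_ratio_recursion j : (i + 1 <= j <= c)%nat ->
  pi i j = acoef c lam mu alpha pi i j + bcoef c lam mu alpha pi i j * pi i (j - 1)%nat.
Proof.
  revert j.
  apply (nat_down_ind (fun j => pi i j = acoef c lam mu alpha pi i j
                                         + bcoef c lam mu alpha pi i j * pi i (j - 1)%nat)).
  - rewrite acoef_at_c. ring.
  - intros j Hj IH. rewrite Nat.sub_succ, Nat.sub_0_r in IH.
    pose proof (den_lower_bound j ltac:(lia) (proj2 (bcoef_bounds (S j) ltac:(lia)))).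
    pose proof INR_i_pos.
    assert (0 < INR (j - i) * alpha) by (apply Rmult_lt_0_compat; [apply lt_0_INR; lia | lra]).
    pose proof (balance_interior c lam mu alpha pi Hst i j ltac:(lia) ltac:(lia)) as Hbal.
    rewrite Nat.min_l, Nat.min_l in Hbal by lia. rewrite IH in Hbal.
    destruct (acoef_bcoef_step j ltac:(lia)) as [-> ->].
    apply Rmult_eq_reg_r with (den j); [|nra]. unfold den in *. field_simplify; [lra|nra].
Qed.

End RatioCoefficients.

End Levels.

Section LevelExpansion.
Variables (c : nat) (lam mu alpha : R) (pi : nat -> nat -> R).
Hypotheses (Hlam : 0 < lam) (Hmu : 0 < mu) (Halpha : 0 < alpha)
  (Hst : stationary c lam mu alpha pi).
Hypothesis Hc : (1 <= c)%nat.
Hypothesis Hdist : forall k l, (k < c)%nat -> (l < c)%nat -> k <> l ->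
  zhat c lam mu alpha k <> zhat c lam mu alpha l.

(* Level 0 is geometric with coefficient [pi_{0,c-1}]; [Acoef 0 _] is a dummy. *)
Definition level_coef (k j : nat) : R :=
  match k with O => pi 0%nat (c - 1)%nat | _ => Acoef c lam mu alpha pi k j end.

Definition level_expansion (k n : nat) : R :=
  sum_f_R0 (fun j => level_coef k j * (/ zhat c lam mu alpha j) ^ n) k.

Lemma Acoef_below k j : (1 <= k < c)%nat -> (j < k)%nat ->
  Acoef c lam mu alpha pi k j
  = INR (c - k + 1) * alpha * level_coef (k - 1) j * zhat c lam mu alpha j
    / fk c lam mu alpha k (zhat c lam mu alpha j).
Proof.
  intros Hk Hj. destruct k as [|[|k]]; [lia| |].
  - replace j with 0%nat by lia. cbn. now replace (c - 1 + 1)%nat with c by lia.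
  - cbn [Acoef]. rewrite (proj2 (Nat.ltb_lt j (S (S k))) Hj).
    reflexivity.
Qed.

Lemma Acoef_diag k : (2 <= k)%nat ->
  Acoef c lam mu alpha pi k k
  = - (INR (c - k + 1) * alpha)
      * sum_f_R0 (fun l => Acoef c lam mu alpha pi (k - 1) l * zhat c lam mu alpha l
                           / fk c lam mu alpha k (zhat c lam mu alpha l)) (k - 1)
    + pi k (c - 1)%nat.
Proof.
  intros Hk. destruct k as [|[|k]]; [lia | lia |]. cbn [Acoef].
  rewrite Nat.ltb_irrefl, Nat.eqb_refl. reflexivity.
Qed.

Lemma Acoef_sum k : (1 <= k < c)%nat ->
  sum_f_R0 (Acoef c lam mu alpha pi k) k = pi k (c - 1)%nat.
Proof.
  intros Hk. destruct k as [|[|k]]; [lia | simpl; lra |].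
  rewrite tech5, Acoef_diag by lia. replace (S (S k) - 1)%nat with (S k) by lia.
  rewrite (sum_eq _ (fun l => Acoef c lam mu alpha pi (S k) l * zhat c lam mu alpha l
                           / fk c lam mu alpha (S (S k)) (zhat c lam mu alpha l)
                           * (INR (c - S (S k) + 1) * alpha))).
  - rewrite <- scal_sum. ring.
  - intros l Hl. rewrite Acoef_below by lia. change (S (S k) - 1)%nat with (S k).
    cbn [level_coef]. unfold Rdiv. ring.
Qed.

Lemma level_expansion_0 n : pi 0%nat (c - 1 + n)%nat = level_expansion 0 n.
Proof.
  unfold level_expansion. cbn [sum_f_R0 level_coef]. induction n as [|n IH].
  - rewrite Nat.add_0_r. ring.
  - pose proof (balance_level0 c lam mu alpha pi Hst (c - 1 + S n) ltac:(lia) ltac:(lia)) as Hbal.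
    replace (c - 1 + S n - 1)%nat with (c - 1 + n)%nat in Hbal by lia.
    rewrite IH in Hbal. assert (0 < INR c * alpha) by (apply Rmult_lt_0_compat; [apply lt_0_INR|]; lia || lra).
    apply Rmult_eq_reg_r with (lam + INR c * alpha); [|lra].
    rewrite Hbal. cbn [zhat pow]. field. lra.
Qed.

Lemma fk_zhat_neq_0 k j : (1 <= k < c)%nat -> (j < c)%nat -> j <> k ->
  fk c lam mu alpha k (zhat c lam mu alpha j) <> 0.
Proof.
  intros Hk Hj Hjk. rewrite fk_factor by assumption.
  pose proof (zhat_gt_1 c lam mu alpha j Hlam Hmu Halpha Hj).
  destruct (zk_zhat_bounds c lam mu alpha k Hlam Hmu Halpha Hk) as [[_ Hz] _].
  pose proof (Hdist j k Hj ltac:(lia) Hjk).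
  apply Rmult_integral_contrapositive_currified; [apply Rmult_integral_contrapositive_currified|];
    lra.
Qed.

Lemma level_expansion_recurrence k n : (1 <= k < c)%nat ->
  INR k * mu * level_expansion k (S (S n)) - bk c lam mu alpha k * level_expansion k (S n)
  + lam * level_expansion k n
  = - (INR (c - k + 1) * alpha) * level_expansion (k - 1) (S n).
Proof.
  intros Hk. unfold level_expansion.
  rewrite !scal_sum, <- minus_sum, <- plus_sum.
  rewrite (sum_eq _ (fun j => - (fk c lam mu alpha k (zhat c lam mu alpha j)
                                * (/ zhat c lam mu alpha j) ^ S (S n)) * level_coef k j)).
  2: { intros j Hj. pose proof (zhat_gt_1 c lam mu alpha j Hlam Hmu Halpha ltac:(lia)).
       transitivity (level_coef k j
         * (INR k * mu * (/ zhat c lam mu alpha j) ^ S (S n)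
            - bk c lam mu alpha k * (/ zhat c lam mu alpha j) ^ S n
            + lam * (/ zhat c lam mu alpha j) ^ n)); [ring|].
       rewrite fk_inv_pow by lra. ring. }
  destruct k as [|k]; [lia|]. rewrite tech5, fk_zhat by assumption.
  rewrite Nat.sub_succ, Nat.sub_0_r.
  replace (- (0 * (/ zhat c lam mu alpha (S k)) ^ S (S n)) * level_coef (S k) (S k)) with 0 by ring.
  rewrite Rplus_0_r. apply sum_eq. intros j Hj.
  pose proof (zhat_gt_1 c lam mu alpha j Hlam Hmu Halpha ltac:(lia)).
  pose proof (fk_zhat_neq_0 (S k) j Hk ltac:(lia) ltac:(lia)).
  change (level_coef (S k) j) with (Acoef c lam mu alpha pi (S k) j).
  rewrite Acoef_below by lia. rewrite Nat.sub_succ, Nat.sub_0_r. simpl pow. field. lra.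
Qed.

Lemma level_expansion_bounded k n : (k < c)%nat ->
  Rabs (level_expansion k n) <= sum_f_R0 (fun j => Rabs (level_coef k j)) k.
Proof.
  intros Hk. unfold level_expansion. eapply Rle_trans; [apply sum_f_R0_triangle|].
  apply sum_Rle. intros j Hj. rewrite Rabs_mult.
  pose proof (zhat_gt_1 c lam mu alpha j Hlam Hmu Halpha ltac:(lia)).
  assert (0 < / zhat c lam mu alpha j < 1).
  { split; [apply Rinv_0_lt_compat; lra|]. rewrite <- Rinv_1. apply Rinv_lt_contravar; lra. }
  rewrite (Rabs_pos_eq ((/ zhat c lam mu alpha j) ^ n)) by (apply pow_le; lra).
  rewrite <- (Rmult_1_r (Rabs (level_coef k j))) at 2.
  apply Rmult_le_compat_l; [apply Rabs_pos|]. rewrite <- (pow1 n). apply pow_incr. lra.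
Qed.

Lemma level_expansion_eq k n : (k < c)%nat -> pi k (c - 1 + n)%nat = level_expansion k n.
Proof.
  revert n. induction k as [|k IH]; intros n Hk; [apply level_expansion_0|].
  set (d := fun n => pi (S k) (c - 1 + n)%nat - level_expansion (S k) n).
  enough (d n = 0) by (unfold d in *; lra).
  assert (Hkc : (1 <= S k < c)%nat) by lia.
  apply (bounded_rec2_zero d (/ zk c lam mu alpha (S k)) (/ zhat c lam mu alpha (S k))
           (1 + sum_f_R0 (fun j => Rabs (level_coef (S k) j)) (S k))).
  - destruct (zk_zhat_bounds c lam mu alpha (S k) Hlam Hmu Halpha Hkc) as [[Hz0 Hz1] _].
    rewrite <- Rinv_1. apply Rinv_lt_contravar; lra.
  - intro m. unfold d, Rminus. eapply Rle_trans; [apply Rabs_triang|]. rewrite Rabs_Ropp.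
    apply Rplus_le_compat; [apply level_bounded with lam mu alpha | apply level_expansion_bounded];
      auto; lia.
  - intro m. rewrite (recurrence_root_form c lam mu alpha (S k) Hlam Hmu Halpha Hkc d
                        (fun _ => 0)); [unfold Rdiv; ring|].
    intro m'. unfold d.
    pose proof (level_recurrence c lam mu alpha pi Hst (S k) m' Hkc) as Hpi.
    pose proof (level_expansion_recurrence (S k) m' Hkc) as Hexp.
    rewrite Nat.sub_succ, Nat.sub_0_r in Hpi, Hexp. rewrite <- IH in Hexp by lia. lra.
  - unfold d, level_expansion. rewrite Nat.add_0_r.
    rewrite (sum_eq _ (Acoef c lam mu alpha pi (S k))) by (intros; cbn [level_coef pow]; ring).
    rewrite Acoef_sum by assumption. ring.
Qed.

Lemma Pihat_expansion i (z : C) : (1 <= i < c)%nat -> Cmod z <= 1 ->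
  is_series (fun m => RtoC (pi i (c + m)%nat) * pow_n z (c + m - i))%C
    (pow_n z (c - i) *
     sum_n (fun j => RtoC (Acoef c lam mu alpha pi i j) / (RtoC (zhat c lam mu alpha j) - z)) i)%C.
Proof.
  intros Hi Hz.
  assert (Hmodes : forall j, (j <= i)%nat ->
    is_series (fun n => RtoC (Acoef c lam mu alpha pi i j * (/ zhat c lam mu alpha j) ^ S n)
                        * pow_n z n)%C
              (RtoC (Acoef c lam mu alpha pi i j) / (RtoC (zhat c lam mu alpha j) - z))%C).
  { intros j Hj. pose proof (zhat_gt_1 c lam mu alpha j Hlam Hmu Halpha ltac:(lia)).
    apply is_series_pole; lra. }
  apply is_series_sum_n, (is_series_scal_l (K := C_AbsRing) (V := C_NormedModule) (pow_n z (c - i)))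
    in Hmodes.
  refine (is_series_ext _ _ _ _ Hmodes). intro n. change (scal ?u ?v) with (u * v)%C.
  replace (pi i (c + n)%nat) with (level_expansion i (S n))
    by (rewrite <- level_expansion_eq by lia; f_equal; lia).
  unfold level_expansion. destruct i as [|i]; [lia|]. cbn [level_coef].
  rewrite RtoC_sum_f_R0, sum_n_Cmult_r.
  replace (c + n - S i)%nat with (c - S i + n)%nat by lia. rewrite pow_n_plus.
  change mult with Cmult. C_atomize_eq. ring.
Qed.

End LevelExpansion.

Theorem lemma3p2 (c : nat) (lam mu alpha : R) (pi : nat -> nat -> R) (i : nat) :
  (3 <= c)%nat -> 0 < lam -> 0 < mu -> 0 < alpha -> lam < INR c * mu ->
  stationary c lam mu alpha pi ->
  (2 <= i <= c - 1)%nat ->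
  (forall j, (i + 1 <= j <= c)%nat ->
     pi i j = acoef c lam mu alpha pi i j + bcoef c lam mu alpha pi i j * pi i (j - 1)%nat)
  /\
  (forall j, (i + 1 <= j <= c)%nat ->
     0 < acoef c lam mu alpha pi i j /\
     0 < bcoef c lam mu alpha pi i j < lam / (INR i * mu))
  /\
  ((forall k l, (k < c)%nat -> (l < c)%nat -> k <> l ->
      zhat c lam mu alpha k <> zhat c lam mu alpha l) ->
   forall z : Complex.C, Cmod z <= 1 ->
     is_series (fun m => RtoC (pi i (c + m)%nat) * pow_n z (c + m - i))%C
       (pow_n z (c - i) *
        sum_n (fun j => RtoC (Acoef c lam mu alpha pi i j) / (RtoC (zhat c lam mu alpha j) - z)) i)%C).
Proof.
  (* The stability condition [lam < c mu] only guarantees that [pi] exists. *)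
  intros Hc Hlam Hmu Halpha _ Hst Hi.
  assert (Hi' : (1 <= i < c)%nat) by lia.
  split; [|split].
  - intros j Hj. exact (pi_ratio_recursion c lam mu alpha pi Hlam Hmu Halpha Hst i Hi' j Hj).
  - intros j Hj. split.
    + exact (acoef_pos c lam mu alpha pi Hlam Hmu Halpha Hst i Hi' j Hj).
    + exact (bcoef_bounds c lam mu alpha pi Hlam Hmu Halpha i Hi' j Hj).
  - intros Hdist z Hz.
    apply (Pihat_expansion c lam mu alpha pi Hlam Hmu Halpha Hst ltac:(lia) Hdist i z Hi' Hz).
Qed.
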